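(* Let $\phi$ be a probability density on $\mathbb{R}$ and consider the location-scale family $f(x;\mu,\sigma)=\sigma^{-1}\phi((x-\mu)/\sigma)$, $(\mu,\sigma)\in\mathbb{R}\times(0,\infty)$. Let $X_1,\dots,X_n,Y$ be iid from $f(\cdot;\mu_0,\sigma_0)$. Define $$\Lambda_n(\boldsymbol{x}_n,y)=\frac{\sup_{\mu,\sigma}f(y;\mu,\sigma)\prod_{i=1}^n f(x_i;\mu,\sigma)}{\sup_{\mu,\mu_y,\sigma}f(y;\mu_y,\sigma)\prod_{i=1}^n f(x_i;\mu,\sigma)}$$ (i.e. the full model lets $Y$ have its own location $\mu_y$ with common scale $\sigma$), and assume both suprema are finite and positive almost surely. Then $\Lambda_n(\boldsymbol{X}_n,Y)$ (equivalently $-2\log\Lambda_n(\boldsymbol{X}_n,Y)$) is a pivotal quantity: its distribution equals that of $\Lambda_n(Z_1,\dots,Z_n,Z_0)$ with $Z_0,\dots,Z_n$ iid with density $\phi$, and hence does not depend on $(\mu_0,\sigma_0)$. Consequently, if this distribution is continuous at its $1-\alpha$ quantile, the parametric-bootstrap prediction region $\{y:-2\log\Lambda_n(\boldsymbol{x}_n,y)\le\lambda^*_{1-\alpha}\}$ (with $\lambda^*_{1-\alpha}$ the $1-\alpha$ quantile of the exact bootstrap distribution of $-2\log\Lambda_n(\boldsymbol{X}_n^*,Y^* )$, $X_i^*,Y^*$ iid from $f(\cdot;\widehat\mu,\widehat\sigma)$ for any estimator $(\widehat\mu,\widehat\sigma)$) has coverage exactly $1-\alpha$ for all $(\mu_0,\sigma_0)$.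 *)

From HB Require Import structures.
From mathcomp Require Import all_boot all_order all_algebra.
From mathcomp Require Import all_classical all_reals all_analysis.

Set Implicit Arguments.
Unset Strict Implicit.
Unset Printing Implicit Defensive.

Import Order.TTheory GRing.Theory Num.Theory.
Local Open Scope classical_set_scope.
Local Open Scope ring_scope.

Section Defs.
Variable R : realType.

Definition is_density (phi : R -> R) : Prop :=
  [/\ measurable_fun [set: R] phi,
      (forall x, 0 <= phi x) &
      (\int[@lebesgue_measure R]_x (phi x)%:E = 1)%E].

Definition ls_dens (phi : R -> R) (mu sigma : R) (x : R) : R :=
  sigma^-1 * phi ((x - mu) / sigma).

Fixpoint iterint (k : nat) (F : seq R -> \bar R) : \bar R :=
  match k with
  | 0 => F [::]
  | k'.+1 => (\int[@lebesgue_measure R]_t iterint k' (fun s => F (t :: s)))%E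
  end.

(* Law of an iid sample s = y :: x_1 :: ... :: x_n (n.+1 observations) with
   common density g:  P(s \in E) = \int ... \int 1_E(s) prod_i g(s_i) ds. *)
Definition iid_law (n : nat) (g : R -> R) (E : set (seq R)) : \bar R :=
  iterint n.+1 (fun s => ((\prod_(v <- s) g v) * \1_E s)%:E).

Definition sup_null (phi : R -> R) (xs : seq R) (y : R) : \bar R :=
  ereal_sup [set (ls_dens phi p.1 p.2 y *
                  \prod_(x <- xs) ls_dens phi p.1 p.2 x)%:E
            | p in [set p : R * R | 0 < p.2]].

(* denominator: sup_{mu, mu_y, sigma>0} f(y;mu_y,sigma) prod_i f(x_i;mu,sigma);
   p = ((mu, mu_y), sigma) *)
Definition sup_full (phi : R -> R) (xs : seq R) (y : R) : \bar R :=
  ereal_sup [set (ls_dens phi p.1.2 p.2 y *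
                  \prod_(x <- xs) ls_dens phi p.1.1 p.2 x)%:E
            | p in [set p : (R * R) * R | 0 < p.2]].

Definition Lambda (phi : R -> R) (xs : seq R) (y : R) : R :=
  fine (sup_null phi xs y) / fine (sup_full phi xs y).

Definition LambdaS (phi : R -> R) (s : seq R) : R :=
  Lambda phi (behead s) (head 0%R s).

Definition LRstat (phi : R -> R) (s : seq R) : R :=
  - 2 * ln (LambdaS phi s).

Definition sups_fin_pos (phi : R -> R) (s : seq R) : Prop :=
  ((0 < sup_null phi (behead s) (head 0%R s) < +oo) /\
   (0 < sup_full phi (behead s) (head 0%R s) < +oo))%E.

Definition quantile (F : R -> R) (alpha : R) : R :=
  inf [set t | 1 - alpha <= F t].

Definition LR_cdf (phi : R -> R) (n : nat) (g : R -> R) (t : R) : R :=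
  fine (iid_law n g [set s | LRstat phi s <= t]).

Definition boot_crit (phi : R -> R) (n : nat) (muh sigh : seq R -> R)
    (alpha : R) (xs : seq R) : R :=
  quantile (LR_cdf phi n (ls_dens phi (muh xs) (sigh xs))) alpha.

End Defs.

From HB Require Import structures.
From mathcomp Require Import all_boot all_order all_algebra.
From mathcomp Require Import all_classical all_reals all_analysis.
From mathcomp Require Import ring lra measurable_realfun.

Set Implicit Arguments.
Unset Strict Implicit.
Unset Printing Implicit Defensive.

Import Order.TTheory GRing.Theory Num.Theory.
Import numFieldNormedType.Exports.
Import HBNNSimple.
Local Open Scope classical_set_scope.
Local Open Scope ring_scope.

(* Write aff m s z = m + s z.  The argument is equivariance:
   - Transforming the whole sample y :: x_1 .. x_n by aff m s (s > 0) multiplies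
     every likelihood in both the null and the full model by s^-(n+1), after the
     matching reparametrization of (mu, mu_y, sigma); hence both suprema scale by
     the same factor and Lambda_n is invariant.
   - By the change of variables z = m + s x in each coordinate, the iid law
     under f(.; m, s) of an event invariant under aff m s equals its law under
     phi.  The events at hand need not be measurable, so the Lebesgue-integral
     facts below are proved for arbitrary nonnegative integrands, by
     approximation from below with simple functions.  For the coverage, the law of -2 log Lambda_n,
   hence the bootstrap critical value, does not depend on the parameters: it is
   the (1 - alpha)-quantile q of the cdf F of -2 log Lambda_n under phi.  The
   coverage is F q, and a cdf of a nonnegative statistic that is continuous at
   its (1 - alpha)-quantile equals 1 - alpha there. *)

Section NonnegIntegral.
Variable R : realType.
Local Notation lam := (@lebesgue_measure R).
Local Open Scope ereal_scope.

Lemma ge0_integral_le (f g : R -> \bar R) :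
  (forall x, 0 <= f x) -> (forall x, f x <= g x) ->
  \int[lam]_x f x <= \int[lam]_x g x.
Proof.
move=> f0 fg; have g0 x : 0 <= g x by exact: le_trans (f0 x) (fg x).
rewrite !ge0_integralTE//; apply: ereal_sup_le => _ [h hf <-].
by exists h => //= x; exact: le_trans (hf x) (fg x).
Qed.

Lemma ge0_integral_le_bound (f : R -> \bar R) (M : \bar R) :
  (forall x, 0 <= f x) ->
  (forall h : {nnsfun measurableTypeR R >-> R},
     (forall x, (h x)%:E <= f x) -> \int[lam]_x (h x)%:E <= M) ->
  \int[lam]_x f x <= M.
Proof.
move=> f0 hM; rewrite ge0_integralTE//; apply: ge_ereal_sup => _ [h hf <-].
by have := hM h hf; rewrite integral_nnsfun// patch_setT.
Qed.

(* Pull out a positive constant: the measurable simple functions below c * f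
   are c times those below f. *)
Lemma integralZl_ge0_le (c : R) (f : R -> \bar R) :
  (0 < c)%R -> (forall x, 0 <= f x) ->
  \int[lam]_x (c%:E * f x) <= c%:E * \int[lam]_x f x.
Proof.
move=> c0 f0; apply: ge0_integral_le_bound => [x|h hf].
  by rewrite mule_ge0 // lee_fin ltW.
have ci0 : (0 < c^-1)%R by rewrite invr_gt0.
have -> : (fun x => (h x)%:E) = (fun x => c%:E * (c^-1 * h x)%:E).
  by apply/funext => x; rewrite -EFinM mulrA divff ?gt_eqF // mul1r.
rewrite ge0_integralZl //; last 3 first.
- by apply/measurable_EFinP/measurable_funM => //; exact: measurable_funPT.
- by move=> x _; rewrite lee_fin mulr_ge0 // ltW.
- by rewrite lee_fin ltW.
rewrite lee_pmul2l ?lte_fin //; apply: ge0_integral_le => x.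
  by rewrite lee_fin mulr_ge0 // ltW.
rewrite -(lee_pmul2l (x := c%:E)) ?lte_fin // -EFinM mulrA.
by rewrite divff ?gt_eqF // mul1r; exact: hf.
Qed.

(* Homogeneity, the reverse inequality coming from the constant c^-1. *)
Lemma integralZl_ge0 (c : R) (f : R -> \bar R) :
  (0 <= c)%R -> (forall x, 0 <= f x) ->
  \int[lam]_x (c%:E * f x) = c%:E * \int[lam]_x f x.
Proof.
move=> c0 f0; have [->|cn0] := eqVneq c 0%R.
  by rewrite mul0e; under eq_integral do rewrite mul0e; rewrite integral0.
have cp : (0 < c)%R by rewrite lt_neqAle eq_sym cn0.
have ci0 : (0 < c^-1)%R by rewrite invr_gt0.
apply/eqP; rewrite eq_le integralZl_ge0_le //=.
have cf0 x : 0 <= c%:E * f x by rewrite mule_ge0 // lee_fin.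
have := integralZl_ge0_le ci0 cf0.
under eq_integral do rewrite muleA -EFinM mulVf ?gt_eqF // mul1e.
by rewrite -(lee_pmul2l (x := c%:E)) ?lte_fin // muleA -EFinM divff ?gt_eqF // mul1e.
Qed.
End NonnegIntegral.

Definition aff (R : realType) (m s z : R) : R := m + s * z.

Section AffineChangeOfVariables.
Variable R : realType.
Local Notation lam := (@lebesgue_measure R).

Section FixedAffineMap.
Variables (m s : R).
Hypothesis s_gt0 : 0 < s.

Lemma aff_measurable : measurable_fun (T:=measurableTypeR R) (U:=measurableTypeR R)
  setT (aff m s).
Proof.
apply: continuous_measurable_fun => z; rewrite /aff.
by apply: continuousD; [exact: cst_continuous|apply: continuousM;
  [exact: cst_continuous|exact: cvg_id]].
Qed.

Lemma aff_preimage_itv (a b : R) :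
  aff m s @^-1` `]a, b] = `](a - m) / s, (b - m) / s]%classic.
Proof.
apply/seteqP; split => z; rewrite /= !in_itv /= /aff.
  move=> /andP[az zb]; rewrite ltr_pdivrMr // ler_pdivlMr //.
  by rewrite ltrBlDl lerBrDl ![z * _]mulrC az zb.
rewrite ltr_pdivrMr // ler_pdivlMr // ltrBlDl lerBrDl.
by rewrite ![z * _]mulrC.
Qed.

Let lam_aff := measure_function_pushforward__canonical__measure_function_Measure
  lam aff_measurable.

(* Lebesgue measure is [s] times its image under [aff m s]: both measures agree
   on half-open intervals, which determine a measure on the Borel sets. *)
Lemma lebesgue_aff_pushforward (E : set R) : measurable E ->
  lam E = mscale (NngNum (ltW s_gt0)) lam_aff E.
Proof.
apply: lebesgue_measure_unique => _ /ocitvP[->|[[a b] /= ab ->]].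
  by rewrite !measure0.
rewrite /mscale /= /pushforward aff_preimage_itv !lebesgue_measure_itv /= !lte_fin ab.
rewrite ltr_pM2r ?invr_gt0 // ltrBlDr subrK ab -!EFinD -EFinM.
by congr (_%:E); field; rewrite gt_eqF.
Qed.

Local Open Scope ereal_scope.

Lemma ge0_integral_aff_measurable (g : R -> \bar R) :
  measurable_fun setT g -> (forall x, 0 <= g x) ->
  \int[lam]_x g x = s%:E * \int[lam]_x (g \o aff m s) x.
Proof.
move=> mg g0; rewrite (eq_measure_integral (mscale (NngNum (ltW s_gt0)) lam_aff));
  last by move=> A mA _; exact: lebesgue_aff_pushforward.
by rewrite ge0_integral_mscale // (ge0_integral_pushforward aff_measurable).
Qed.

(* One inequality of the change of variables for arbitrary nonnegative
   integrands, obtained by approximating from below with simple functions. *)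
Lemma ge0_integral_aff_le (f : R -> \bar R) : (forall x, 0 <= f x) ->
  \int[lam]_x f x <= s%:E * \int[lam]_x (f \o aff m s) x.
Proof.
move=> f0; apply: ge0_integral_le_bound => // h hf.
have mh : measurable_fun setT (fun x => (h x)%:E).
  by apply/measurable_EFinP; exact: measurable_funPT.
rewrite ge0_integral_aff_measurable // => [|x]; last by rewrite lee_fin.
rewrite lee_pmul2l ?lte_fin //; apply: ge0_integral_le => x /=.
  by rewrite lee_fin.
exact: hf.
Qed.
End FixedAffineMap.

Local Open Scope ereal_scope.

(* Change of variables z = m + s x (s > 0) in the Lebesgue integral of an
   arbitrary, possibly non-measurable, nonnegative function; the reverse
   inequality is the previous one for the inverse map aff (-m/s) s^-1. *)
Lemma ge0_integral_aff (m s : R) (f : R -> \bar R) : (0 < s)%R ->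
  (forall x, 0 <= f x) ->
  \int[lam]_x f x = s%:E * \int[lam]_x (f \o aff m s) x.
Proof.
move=> s0 f0; apply/eqP; rewrite eq_le ge0_integral_aff_le //=.
have si0 : (0 < s^-1)%R by rewrite invr_gt0.
have aff_inv : (f \o aff m s) \o aff (- m / s) s^-1 = f.
  by apply/funext => x; rewrite /aff /=; congr f; field; rewrite gt_eqF.
have := ge0_integral_aff_le (- m / s) si0 (fun x => f0 (aff m s x)).
rewrite aff_inv -(lee_pmul2l (x := s%:E)) ?lte_fin // muleA -EFinM.
by rewrite divff ?gt_eqF // mul1e.
Qed.
End AffineChangeOfVariables.

Section IteratedIntegral.
Variable R : realType.
Local Open Scope ereal_scope.

Lemma iterint_ge0 k (F : seq R -> \bar R) :
  (forall u, 0 <= F u) -> 0 <= iterint k F.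
Proof.
elim: k F => [|k IH] F F0 /=; first exact: F0.
by apply: integral_ge0 => t _; apply: IH.
Qed.

Lemma iterint_le k (F G : seq R -> \bar R) :
  (forall u, 0 <= F u) -> (forall u, F u <= G u) -> iterint k F <= iterint k G.
Proof.
elim: k F G => [|k IH] F G F0 FG /=; first exact: FG.
by apply: ge0_integral_le => t; [exact: iterint_ge0|exact: IH].
Qed.

Lemma eq_iterint k (F G : seq R -> \bar R) :
  (forall u, size u = k -> F u = G u) -> iterint k F = iterint k G.
Proof.
elim: k F G => [|k IH] F G FG /=; first exact: FG.
congr (integral _ _ _); apply/funext => t.
by apply: IH => u su; apply: FG; rewrite /= su.
Qed.

Lemma iterintZl k (F : seq R -> \bar R) (c : R) :
  (0 <= c)%R -> (forall u, 0 <= F u) ->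
  iterint k (fun u => c%:E * F u) = c%:E * iterint k F.
Proof.
elim: k F => [|k IH] F c0 F0 //=.
under eq_fun do rewrite IH //.
by rewrite integralZl_ge0 // => t; apply: iterint_ge0.
Qed.

Lemma iterint_aff (m s : R) k (F G : seq R -> \bar R) : (0 < s)%R ->
  (forall u, 0 <= F u) ->
  (forall u, size u = k -> G u = (s ^+ k)%:E * F (map (aff m s) u)) ->
  iterint k F = iterint k G.
Proof.
move=> s0; have sk0 j : (0 <= s ^+ j)%R by rewrite exprn_ge0 // ltW.
elim: k F G => [|k IH] F G F0 FG /=; first by rewrite FG // expr0 mul1e.
rewrite (ge0_integral_aff m s0) => [|t]; last exact: iterint_ge0.
pose H z := iterint k (fun u => F (map (aff m s) (z :: u))).
have H0 z : 0 <= H z by apply: iterint_ge0.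
have FH z : iterint k (fun u => F (aff m s z :: u)) = (s ^+ k)%:E * H z.
  by rewrite -iterintZl //; apply: IH.
have GH z : iterint k (fun u => G (z :: u)) = (s ^+ k.+1)%:E * H z.
  by rewrite -iterintZl //; apply: eq_iterint => u su; rewrite FG //= su.
rewrite /comp; under eq_fun do rewrite FH; under [RHS]eq_integral do rewrite GH.
by rewrite !integralZl_ge0 // muleA -EFinM exprS.
Qed.
End IteratedIntegral.

Lemma ereal_sup_reparam (R : realType) (T : Type) (P : set T) (L1 L2 : T -> R)
    (th th' : T -> T) (c : R) : 0 < c ->
  (forall p, P p -> P (th p)) -> (forall p, P p -> P (th' p)) ->
  (forall p, P p -> th (th' p) = p) -> (forall p, P p -> L1 p = c * L2 (th p)) ->
  ereal_sup [set (L1 p)%:E | p in P] =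
  (c%:E * ereal_sup [set (L2 p)%:E | p in P])%E.
Proof.
move=> c0 Pth Pth' thK L12; rewrite -ereal_sup_pZl //; congr ereal_sup.
apply/seteqP; split => [_ [p Pp <-]|_ [_ [p Pp <-] <-]].
  by exists (L2 (th p))%:E; [exists (th p) => //; exact: Pth|rewrite L12 ?EFinM].
exists (th' p); first exact: Pth'.
by rewrite L12 ?thK ?EFinM //; exact: Pth'.
Qed.

(* fine commutes with multiplication by a positive constant (infinite values
   are sent to 0 on both sides). *)
Lemma fineZl (R : realType) (c : R) (x : \bar R) : 0 < c -> fine (c%:E * x)%E = c * fine x.
Proof.
move=> c0; case: x => [r| |] //=.
- by rewrite mulry gtr0_sg // mul1e /= mulr0.
- by rewrite mulrNy gtr0_sg // mul1e /= mulr0.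
Qed.

Section LocationScaleEquivariance.
Variables (R : realType) (phi : R -> R) (m s : R).
Hypothesis s_gt0 : 0 < s.

Lemma ls_dens_aff a b x :
  ls_dens phi a b (aff m s x) = s^-1 * ls_dens phi ((a - m) / s) (b / s) x.
Proof.
rewrite /ls_dens /aff; have [->|b0] := eqVneq b 0; first by rewrite !(mul0r, invr0, mulr0).
have -> : (x - (a - m) / s) / (b / s) = (m + s * x - a) / b by field; rewrite b0 gt_eqF.
by field; rewrite b0 gt_eqF.
Qed.

Lemma prod_ls_dens_aff a b xs :
  \prod_(x <- map (aff m s) xs) ls_dens phi a b x =
  s^-1 ^+ size xs * \prod_(x <- xs) ls_dens phi ((a - m) / s) (b / s) x.
Proof.
elim: xs => [|x xs IH]; first by rewrite !big_nil expr0 mulr1.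
by rewrite /= !big_cons IH ls_dens_aff exprS; ring.
Qed.

Lemma sup_null_aff xs y : sup_null phi (map (aff m s) xs) (aff m s y) =
  ((s^-1 ^+ (size xs).+1)%:E * sup_null phi xs y)%E.
Proof.
apply: (ereal_sup_reparam (th := fun p => ((p.1 - m) / s, p.2 / s))
                          (th' := fun p => (m + s * p.1, s * p.2))).
- by rewrite exprn_gt0 // invr_gt0.
- by move=> [a b] /= b0; rewrite divr_gt0.
- by move=> [a b] /= b0; rewrite mulr_gt0.
- by move=> [a b] _ /=; congr pair; field; rewrite gt_eqF.
- by move=> [a b] _ /=; rewrite prod_ls_dens_aff ls_dens_aff exprS; ring.
Qed.

Lemma sup_full_aff xs y : sup_full phi (map (aff m s) xs) (aff m s y) =
  ((s^-1 ^+ (size xs).+1)%:E * sup_full phi xs y)%E.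
Proof.
apply: (ereal_sup_reparam
  (th := fun p => (((p.1.1 - m) / s, (p.1.2 - m) / s), p.2 / s))
  (th' := fun p => ((m + s * p.1.1, m + s * p.1.2), s * p.2))).
- by rewrite exprn_gt0 // invr_gt0.
- by move=> [[a1 a2] b] /= b0; rewrite divr_gt0.
- by move=> [[a1 a2] b] /= b0; rewrite mulr_gt0.
- by move=> [[a1 a2] b] _ /=; congr (pair (pair _ _) _); field; rewrite gt_eqF.
- by move=> [[a1 a2] b] _ /=; rewrite prod_ls_dens_aff ls_dens_aff exprS; ring.
Qed.

Lemma LambdaS_aff u : LambdaS phi (map (aff m s) u) = LambdaS phi u.
Proof.
case: u => [|y xs] //; rewrite /LambdaS /Lambda /=.
rewrite sup_null_aff sup_full_aff !fineZl ?exprn_gt0 ?invr_gt0 //.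
by rewrite invfM mulrACA divff ?mul1r // expf_neq0 // invr_eq0 gt_eqF.
Qed.

Lemma LRstat_aff u : LRstat phi (map (aff m s) u) = LRstat phi u.
Proof. by rewrite /LRstat LambdaS_aff. Qed.
End LocationScaleEquivariance.

Section IidLaw.
Variables (R : realType) (phi : R -> R).
Hypothesis phi_ge0 : forall x, 0 <= phi x.
Local Open Scope ereal_scope.

Lemma ls_dens_ge0 mu sigma x : (0 < sigma)%R -> (0 <= ls_dens phi mu sigma x)%R.
Proof. by move=> s0; rewrite /ls_dens mulr_ge0 // invr_ge0 ltW. Qed.

Lemma ls_dens_std : ls_dens phi 0 1 = phi.
Proof. by apply/funext => x; rewrite /ls_dens invr1 mul1r subr0 mulr1. Qed.

Lemma iid_integrand_ge0 (g : R -> R) (E : set (seq R)) u :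
  (forall x, 0 <= g x)%R -> 0 <= ((\prod_(v <- u) g v) * \1_E u)%:E.
Proof. by move=> g0; rewrite lee_fin mulr_ge0 ?prodr_ge0 // indicE ler0n. Qed.

Lemma iid_law_aff n (E : set (seq R)) mu sigma : (0 < sigma)%R ->
  (forall u, E (map (aff mu sigma) u) = E u) ->
  iid_law n (ls_dens phi mu sigma) E = iid_law n phi E.
Proof.
move=> s0 EE; rewrite /iid_law; apply: (iterint_aff (m := mu) s0) => [u|u su].
  by apply: iid_integrand_ge0 => x; exact: ls_dens_ge0.
rewrite -EFinM prod_ls_dens_aff // !indicE subrr mul0r divff ?gt_eqF //.
have -> : (map (aff mu sigma) u \in E) = (u \in E).
  by apply/idP/idP => /set_mem Eu; apply/mem_set; rewrite ?EE // -EE.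
by rewrite ls_dens_std su mulrA mulrA -exprMn mulfV ?gt_eqF // expr1n mul1r.
Qed.

Lemma iid_law_ge0 n E : 0 <= iid_law n phi E.
Proof. by apply: iterint_ge0 => u; exact: iid_integrand_ge0. Qed.

Lemma iid_law_le n (E1 E2 : set (seq R)) : E1 `<=` E2 ->
  iid_law n phi E1 <= iid_law n phi E2.
Proof.
move=> E12; apply: iterint_le => u; first exact: iid_integrand_ge0.
rewrite lee_fin ler_wpM2l ?prodr_ge0 // !indicE ler_nat.
by case: (boolP (u \in E1)) => // /set_mem /E12 /mem_set ->.
Qed.

Lemma iid_law_set0 n : iid_law n phi set0 = 0.
Proof.
rewrite /iid_law -(mul0e (iterint n.+1 (fun u => (\prod_(v <- u) phi v)%:E))).
rewrite -iterintZl // => [|u]; last by rewrite lee_fin prodr_ge0.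
by apply: eq_iterint => u _; rewrite indic0 mulr0 mul0e.
Qed.

Hypothesis phi_int1 : \int[@lebesgue_measure R]_x (phi x)%:E = 1.

(* The joint density of k independent draws from phi integrates to 1. *)
Lemma iterint_prod_density k : iterint k (fun u => (\prod_(v <- u) phi v)%:E) = 1.
Proof.
elim: k => [|k IH] /=; first by rewrite big_nil.
rewrite -phi_int1; congr (integral _ _ _); apply/funext => t.
rewrite -[RHS]mule1 -IH -iterintZl // => [|u]; last by rewrite lee_fin prodr_ge0.
by apply: eq_iterint => u _; rewrite big_cons EFinM.
Qed.

Lemma iid_law_le1 n E : iid_law n phi E <= 1.
Proof.
rewrite -(iterint_prod_density n.+1); apply: iterint_le => u.
  exact: iid_integrand_ge0.
rewrite lee_fin ler_piMr ?prodr_ge0 // indicE lern1 leq_b1.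
Qed.
End IidLaw.

Section LikelihoodRatioRange.
Variables (R : realType) (phi : R -> R).
Hypothesis phi_ge0 : forall x, 0 <= phi x.
Local Open Scope ereal_scope.

(* The null model is the submodel mu_y = mu of the full model. *)
Lemma sup_null_le_full xs y : sup_null phi xs y <= sup_full phi xs y.
Proof. by apply: ereal_sup_le => _ [[a b] /= b0 <-]; exists ((a, a), b). Qed.

Lemma sup_full_ge0 xs y : 0 <= sup_full phi xs y.
Proof.
apply: le_trans (ereal_sup_ubound _); last by exists ((0%R, 0%R), 1%R) => /=.
by rewrite lee_fin mulr_ge0 ?prodr_ge0 // => *; exact: ls_dens_ge0.
Qed.

(* The likelihood ratio is at most 1 (also when a supremum is infinite, since
   fine sends it to 0). *)
Lemma Lambda_le1 xs y : (Lambda phi xs y <= 1)%R.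
Proof.
rewrite /Lambda; move: (sup_null_le_full xs y) (sup_full_ge0 xs y).
case: (sup_full phi xs y) => [r| |] //= + r0; last by rewrite invr0 mulr0.
have [->|rn0] := eqVneq r 0%R; first by rewrite invr0 mulr0.
have rp : (0 < r)%R by rewrite lt_neqAle eq_sym rn0 -lee_fin.
by rewrite ler_pdivrMr // mul1r; case: (sup_null phi xs y).
Qed.

Lemma LRstat_ge0 u : (0 <= LRstat phi u)%R.
Proof.
rewrite /LRstat mulNr oppr_ge0 mulr_ge0_le0 //.
exact/ln_le0/Lambda_le1.
Qed.
End LikelihoodRatioRange.

(* A cdf F of a nonnegative random variable that is continuous at its
   (1 - alpha)-quantile q takes the value 1 - alpha at q: continuity from the
   right gives F q >= 1 - alpha, continuity from the left F q <= 1 - alpha. *)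
Lemma cdf_at_quantile (R : realType) (F : R -> R) (alpha : R) :
  0 < alpha < 1 -> {homo F : s t / s <= t} -> (forall t, t < 0 -> F t = 0) ->
  F t @[t --> +oo%R] --> (1 : R) -> {for quantile F alpha, continuous F} ->
  F (quantile F alpha) = 1 - alpha.
Proof.
move=> /andP[a0 a1] Fmono Fneg Fcvg Fcont.
set S := [set t | 1 - alpha <= F t]; set q := quantile F alpha.
have Sne : S !=set0.
  have [|M [_ HM]] := cvgr_gt _ Fcvg (1 - alpha); first by rewrite gtrBl.
  by exists (M + 1); apply/ltW/HM; rewrite ltrDl.
have Slb : has_lbound S.
  exists 0 => t St; rewrite leNgt; apply/negP => t0.
  by move: St; rewrite /S /= Fneg // subr_le0 leNgt a1.
have half_lt (e : R) : 0 < e -> 0 < e / 2 < e.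
  by move=> e0; apply/andP; split; lra.
apply/eqP; rewrite eq_le; apply/andP; split; rewrite leNgt; apply/negP => Fq.
- have /nbhs_ballP[e /= e0 He] : \forall t \near q, 1 - alpha < F t.
    exact: (cvgr_gt _ Fcont).
  have /andP[e20 e2e] := half_lt e e0.
  have Sq : S (q - e / 2).
    apply/ltW/He; rewrite /ball /= opprB addrC subrK gtr0_norm //.
  by have := ge_inf Slb Sq; rewrite -/q; lra.
- have /nbhs_ballP[e /= e0 He] : \forall t \near q, F t < 1 - alpha.
    exact: (cvgr_lt _ Fcont).
  have /andP[e20 e2e] := half_lt e e0.
  have qlt : q < q + e / 2 by rewrite ltrDl.
  have [y Sy yq] := inf_lt Sne qlt.
  have : F (q + e / 2) < 1 - alpha.
    by apply: He; rewrite /ball /= opprD addrA subrr add0r normrN gtr0_norm.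
  by rewrite ltNge (le_trans Sy (Fmono _ _ (ltW yq))).
Qed.

Section PivotalCdf.
Variables (R : realType) (phi : R -> R) (n : nat).
Hypothesis phi_ge0 : forall x, 0 <= phi x.
Hypothesis phi_int1 : (\int[@lebesgue_measure R]_x (phi x)%:E = 1)%E.

Lemma LR_cdf_aff m s : 0 < s -> LR_cdf phi n (ls_dens phi m s) = LR_cdf phi n phi.
Proof.
move=> s0; apply/funext => t; rewrite /LR_cdf iid_law_aff // => u.
by rewrite /= LRstat_aff.
Qed.

Lemma boot_crit_pivotal (muh sigh : seq R -> R) alpha xs : 0 < sigh xs ->
  boot_crit phi n muh sigh alpha xs = quantile (LR_cdf phi n phi) alpha.
Proof. by move=> s0; rewrite /boot_crit LR_cdf_aff. Qed.

Lemma LR_cdfE t :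
  (LR_cdf phi n phi t)%:E = iid_law n phi [set u | LRstat phi u <= t].
Proof.
rewrite /LR_cdf fineK // ge0_fin_numE ?iid_law_ge0 //.
by rewrite (le_lt_trans (iid_law_le1 _ _ _ _)) ?ltry.
Qed.

Lemma LR_cdf_nondecreasing : {homo LR_cdf phi n phi : s t / s <= t}.
Proof.
move=> s t st; rewrite -lee_fin !LR_cdfE; apply: iid_law_le => // u /= us.
exact: le_trans st.
Qed.

Lemma LR_cdf_neg t : t < 0 -> LR_cdf phi n phi t = 0.
Proof.
move=> t0; apply/EFin_inj; rewrite LR_cdfE.
suff -> : [set u | LRstat phi u <= t] = set0 by rewrite iid_law_set0.
apply/seteqP; split => // u /= ut.
by have := LRstat_ge0 phi_ge0 u; rewrite leNgt (le_lt_trans ut t0).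
Qed.
End PivotalCdf.

(* Main theorem. *)
Theorem theorem1 (R : realType) (phi : R -> R) (n : nat)
  (Hphi : is_density phi)
  (Has : forall mu sigma : R, 0 < sigma ->
     iid_law n (ls_dens phi mu sigma) [set s | sups_fin_pos phi s] = 1%E) :
  (forall (B : set R), measurable B ->
   forall mu0 sigma0 : R, 0 < sigma0 ->
     iid_law n (ls_dens phi mu0 sigma0) [set s | B (LambdaS phi s)] =
     iid_law n phi [set s | B (LambdaS phi s)]) /\
  (forall (alpha : R) (muh sigh : seq R -> R),
     0 < alpha < 1 ->
     (forall xs, 0 < sigh xs) ->
     LR_cdf phi n phi t @[t --> +oo%R] --> (1 : R) ->
     {for quantile (LR_cdf phi n phi) alpha, continuous (LR_cdf phi n phi)} ->
     forall mu0 sigma0 : R, 0 < sigma0 ->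
       iid_law n (ls_dens phi mu0 sigma0)
         [set s | LRstat phi s <= boot_crit phi n muh sigh alpha (behead s)] =
       (1 - alpha)%:E).
Proof.
have [_ phi_ge0 phi_int1] := Hphi.
split=> [B _ mu0 sigma0 s0|alpha muh sigh alpha01 sigh_gt0 Fcvg Fcont mu0 sigma0 s0].
  by apply: iid_law_aff => // u; rewrite /= LambdaS_aff.
(* The critical value is the same for all data, namely the quantile q of the
   law of -2 log Lambda_n under phi. *)
set q := quantile (LR_cdf phi n phi) alpha.
have -> : [set s | LRstat phi s <= boot_crit phi n muh sigh alpha (behead s)] =
          [set s | LRstat phi s <= q].
  by apply/funext => s; rewrite /= boot_crit_pivotal.
rewrite iid_law_aff // => [|u]; last by rewrite /= LRstat_aff.
rewrite -LR_cdfE // cdf_at_quantile //.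
- exact: LR_cdf_nondecreasing.
- exact: LR_cdf_neg.
Qed.
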